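(* Let $\mathcal{C}$ be a small elegant Reedy category, with face maps the morphisms of $\mathcal{C}^+$ and degeneracy maps the morphisms of $\mathcal{C}^-$. Assume the following for every face map $f\colon a\to c$ and every morphism $g\colon b\to c$ of $\mathcal{C}$: - a pullback of $f$ along $g$ exists in $\mathcal{C}$; - in this pullback square, the base change of $f$ along $g$ is a face map; - the base change of $g$ along $f$ is a face map if $g$ is a face map, and a degeneracy map if $g$ is a degeneracy map. Then the functor $\operatorname{colim}\colon \widehat{\mathcal{C}}\to\mathbf{Set}$ preserves monomorphisms.
   Context: A Reedy category is a category $\mathcal{C}$ with a degree function on objects and wide subcategories $\mathcal{C}^+$ (face maps, which raise degree unless identities) and $\mathcal{C}^-$ (degeneracy maps, which lower degree unless identities), such that every morphism factors uniquely as a degeneracy map followed by a face map. It is elegant (in the sense of Bergner–Rezk) if for every presheaf $X$ on $\mathcal{C}$ and every $x\in X(r)$ there is a unique pair $(\sigma\colon r\to s,\ y\in X(s))$ with $\sigma$ a degeneracy map, $y$ nondegenerate and $x=\sigma^* y$; here $y$ is nondegenerate if it is not of the form $\tau^*z$ for a non-identity degeneracy map $\tau$. $\widehat{\mathcal{C}}$ denotes presheaves of sets on $\mathcal{C}$. The colimit of a presheaf is the set of connected components of its category of elements. *)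

From Stdlib Require Import Relations Relation_Operators.


Record Category := {
  Ob :> Type;
  Hom : Ob -> Ob -> Type;
  idm : forall a, Hom a a;
  comp : forall a b c, Hom b c -> Hom a b -> Hom a c;
  comp_id_l : forall a b (f : Hom a b), comp a b b (idm b) f = f;
  comp_id_r : forall a b (f : Hom a b), comp a a b f (idm a) = f;
  comp_assoc : forall a b c d (f : Hom a b) (g : Hom b c) (h : Hom c d),
      comp a c d h (comp a b c g f) = comp a b d (comp b c d h g) f
}.

Arguments Hom {c0} a b.
Arguments idm {c0} a.
Arguments comp {c0 a b c} g f.

Definition IsId (C : Category) (a b : C) (f : Hom a b) : Prop :=
  exists p : a = b,
    match p in _ = b' return Hom a b' with eq_refl => idm a end = f.
Arguments IsId {C a b} f.

Definition WideSub (C : Category) (P : forall a b : C, Hom a b -> Prop) : Prop :=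
  (forall a, P a a (idm a)) /\
  (forall a b c (f : Hom a b) (g : Hom b c), P a b f -> P b c g -> P a c (comp g f)).

Arguments WideSub {C} P.

Record Reedy (C : Category) := {
  deg : C -> nat;
  face : forall a b : C, Hom a b -> Prop;
  degen : forall a b : C, Hom a b -> Prop;
  face_wide : WideSub face;
  degen_wide : WideSub degen;
  face_raise : forall a b (f : Hom a b), face a b f -> IsId f \/ deg a < deg b;
  degen_lower : forall a b (f : Hom a b), degen a b f -> IsId f \/ deg b < deg a;
  factor_exists : forall a c (f : Hom a c),
      exists b (s : Hom a b) (d : Hom b c), degen a b s /\ face b c d /\ f = comp d s;
  factor_unique : forall a c b (s : Hom a b) (d : Hom b c) b' (s' : Hom a b') (d' : Hom b' c),
      degen a b s -> face b c d -> degen a b' s' -> face b' c d' -> comp d s = comp d' s' ->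
      existT (fun b0 => (Hom a b0 * Hom b0 c)%type) b (s, d) =
      existT (fun b0 => (Hom a b0 * Hom b0 c)%type) b' (s', d')
}.

Arguments deg {C} r _.
Arguments face {C} r {a b} f.
Arguments degen {C} r {a b} f.

Record Presheaf (C : Category) := {
  PF :> C -> Type;
  act : forall a b : C, Hom a b -> PF b -> PF a;
  act_id : forall a (x : PF a), act a a (idm a) x = x;
  act_comp : forall a b c (f : Hom a b) (g : Hom b c) (x : PF c),
      act a c (comp g f) x = act a b f (act b c g x)
}.

Arguments act {C} p {a b} f x.

Definition Nondeg (C : Category) (R : Reedy C) (X : Presheaf C) (s : C) (y : X s) : Prop :=
  ~ exists (t : C) (tau : Hom s t) (z : X t), degen R tau /\ ~ IsId tau /\ y = act X tau z.

Arguments Nondeg {C} R X {s} y.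

Definition Elegant (C : Category) (R : Reedy C) : Prop :=
  forall (X : Presheaf C) (r : C) (x : X r),
    (exists (s : C) (sigma : Hom r s) (y : X s),
        degen R sigma /\ Nondeg R X y /\ x = act X sigma y) /\
    (forall s (sigma : Hom r s) (y : X s) s' (sigma' : Hom r s') (y' : X s'),
        degen R sigma -> Nondeg R X y -> x = act X sigma y ->
        degen R sigma' -> Nondeg R X y' -> x = act X sigma' y' ->
        existT (fun s0 => (Hom r s0 * X s0)%type) s (sigma, y) =
        existT (fun s0 => (Hom r s0 * X s0)%type) s' (sigma', y')).

(* (p, pa, pb) is a pullback of f : a -> c along g : b -> c:
   f o pa = g o pb and universal. pb is the base change of f along g,
   pa is the base change of g along f. *)
Definition IsPullback (C : Category) (a b c p : C) (f : Hom a c) (g : Hom b c)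
    (pa : Hom p a) (pb : Hom p b) : Prop :=
  comp f pa = comp g pb /\
  forall (q : C) (u : Hom q a) (v : Hom q b), comp f u = comp g v ->
    exists h : Hom q p, (comp pa h = u /\ comp pb h = v) /\
      forall h' : Hom q p, comp pa h' = u -> comp pb h' = v -> h' = h.

Arguments Elegant {C} R.
Arguments IsPullback {C a b c p} f g pa pb.

Record NatTrans (C : Category) (X Y : Presheaf C) := {
  comp_nt :> forall a : C, X a -> Y a;
  natural : forall a b (f : Hom a b) (y : X b),
      comp_nt a (act X f y) = act Y f (comp_nt b y)
}.

Arguments NatTrans {C} X Y.
Arguments comp_nt {C X Y} n a _.
Arguments natural {C X Y} n a b f y.

Definition MonoPsh (C : Category) (X Y : Presheaf C) (alpha : NatTrans X Y) : Prop :=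
  forall (Z : Presheaf C) (beta gamma : NatTrans Z X),
    (forall a (z : Z a), alpha a (beta a z) = alpha a (gamma a z)) ->
    forall a (z : Z a), beta a z = gamma a z.

Arguments MonoPsh {C X Y} alpha.

(* Category of elements and its connected components:
   colim X = (sigT X) / ConnEl X. *)
Definition ElArrow (C : Category) (X : Presheaf C) (e1 e2 : {a : C & X a}) : Prop :=
  exists f : Hom (projT1 e1) (projT1 e2), act X f (projT2 e2) = projT2 e1.

Arguments ElArrow {C} X e1 e2.

Definition ConnEl (C : Category) (X : Presheaf C) : relation {a : C & X a} :=
  clos_refl_sym_trans _ (ElArrow X).

Arguments ConnEl {C} X _ _.

(* the map on elements induced by alpha; it descends to colim alpha *)
Definition el_map (C : Category) (X Y : Presheaf C) (alpha : NatTrans X Y)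
    (e : {a : C & X a}) : {a : C & Y a} :=
  existT (fun a => Y a) (projT1 e) (alpha (projT1 e) (projT2 e)).

Arguments el_map {C X Y} alpha e.

(* colim alpha : colim X -> colim Y is injective (= mono in Set) *)
Definition ColimInjective (C : Category) (X Y : Presheaf C) (alpha : NatTrans X Y) : Prop :=
  forall e1 e2, ConnEl Y (el_map alpha e1) (el_map alpha e2) -> ConnEl X e1 e2.

Arguments ColimInjective {C X Y} alpha.

(* A monomorphism of presheaves is injective in each component, so it suffices
   to show that two elements of a presheaf are connected in its category of
   elements as soon as they are joined by a single span.  That is the case when
   every cospan in C completes to a commutative square, which we get as follows:
   factor one leg as a face map after a degeneracy, pull the face map back, and
   split the degeneracy.  Degeneracies are split epimorphisms in an elegant
   Reedy category: if [s : a -> b] had no section, two copies of the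
   representable at [b] glued along the sieve of [s] would contain two distinct
   nondegenerate elements with the same [s]-degeneration. *)
From Stdlib Require Import Relations Relation_Operators Lia ClassicalEpsilon ProofIrrelevance Eqdep.

Lemma exist_eq {A : Type} {P : A -> Prop} (x y : sig P) :
  proj1_sig x = proj1_sig y -> x = y.
Proof. destruct x, y; simpl; apply subset_eq_compat. Qed.

Section SplitDegeneracies.

Variables (C : Category) (R : Reedy C).

Lemma degen_retract_IsId (b t : C) (tau : Hom b t) (h : Hom t b) :
  degen R tau -> comp h tau = idm b -> IsId tau.
Proof.
  intros Dtau Eh.
  destruct (degen_lower _ R _ _ tau Dtau) as [Itau | Ltau]; [exact Itau |].
  exfalso.
  destruct (factor_exists _ R _ _ h) as [m [hm [hp [Dhm [Fhp ->]]]]].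
  assert (Dcomp : degen R (comp hm tau)) by (apply (proj2 (degen_wide _ R)); assumption).
  assert (Eid : comp hp (comp hm tau) = comp (idm b) (idm b))
    by (rewrite comp_id_l, comp_assoc; exact Eh).
  pose proof (factor_unique _ R _ _ _ _ _ _ _ _ Dcomp Fhp
                (proj1 (degen_wide _ R) b) (proj1 (face_wide _ R) b) Eid) as U.
  apply (f_equal (@projT1 _ _)) in U; simpl in U; subst m.
  destruct (degen_lower _ R _ _ hm Dhm) as [[-> _] | Lhm]; lia.
Qed.

Definition Factors (a b : C) (s : Hom a b) (c : C) (h : Hom c b) : Prop :=
  exists k : Hom c a, comp s k = h.

(* Two copies of the representable at [b] glued along the sieve generated by
   [s]: a map into [b] carries a flag, which is forced to [false] on the sieve. *)
Definition glued_repr_ob (a b : C) (s : Hom a b) (c : C) : Type :=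
  { p : Hom c b * bool | Factors a b s c (fst p) -> snd p = false }.

Definition reset_flag (a b : C) (s : Hom a b) (c : C) (h : Hom c b) (i : bool) : bool :=
  if excluded_middle_informative (Factors a b s c h) then false else i.

Lemma reset_flag_Factors a b s c h i :
  Factors a b s c h -> reset_flag a b s c h i = false.
Proof. unfold reset_flag; destruct excluded_middle_informative; tauto. Qed.

Lemma reset_flag_not_Factors a b s c h i :
  ~ Factors a b s c h -> reset_flag a b s c h i = i.
Proof. unfold reset_flag; destruct excluded_middle_informative; tauto. Qed.

Definition glued_repr_act (a b : C) (s : Hom a b) (c d : C) (f : Hom c d)
    (x : glued_repr_ob a b s d) : glued_repr_ob a b s c :=
  let h := comp (fst (proj1_sig x)) f in
  exist _ (h, reset_flag a b s c h (snd (proj1_sig x))) (reset_flag_Factors a b s c h _).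

Lemma glued_repr_act_id a b s c (x : glued_repr_ob a b s c) :
  glued_repr_act a b s c c (idm c) x = x.
Proof.
  apply exist_eq; destruct x as [[h i] Hi]; simpl in *.
  rewrite comp_id_r; f_equal.
  destruct (excluded_middle_informative (Factors a b s c h)) as [F | F].
  - rewrite reset_flag_Factors by exact F; symmetry; exact (Hi F).
  - exact (reset_flag_not_Factors a b s c h i F).
Qed.

Lemma glued_repr_act_comp a b s c d e (f : Hom c d) (g : Hom d e)
    (x : glued_repr_ob a b s e) :
  glued_repr_act a b s c e (comp g f) x
  = glued_repr_act a b s c d f (glued_repr_act a b s d e g x).
Proof.
  apply exist_eq; destruct x as [[h i] Hi]; simpl in *.
  rewrite comp_assoc; f_equal.
  destruct (excluded_middle_informative (Factors a b s c (comp (comp h g) f))) as [F | F].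
  - rewrite !reset_flag_Factors by exact F; reflexivity.
  - assert (Fg : ~ Factors a b s d (comp h g)).
    { intros [k Hk]; apply F; exists (comp k f); rewrite comp_assoc, Hk; reflexivity. }
    rewrite (reset_flag_not_Factors a b s d (comp h g) i Fg); reflexivity.
Qed.

Definition glued_repr (a b : C) (s : Hom a b) : Presheaf C :=
  Build_Presheaf C (glued_repr_ob a b s) (glued_repr_act a b s)
    (glued_repr_act_id a b s) (glued_repr_act_comp a b s).

Lemma glued_repr_Nondeg a b s (y : glued_repr a b s b) :
  fst (proj1_sig y) = idm b -> Nondeg R (glued_repr a b s) y.
Proof.
  intros Hy [t [tau [z [Dtau [Ntau Ez]]]]].
  apply (f_equal (fun w => fst (proj1_sig w))) in Ez; simpl in Ez.
  rewrite Hy in Ez.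
  exact (Ntau (degen_retract_IsId b t tau _ Dtau (eq_sym Ez))).
Qed.

Lemma degen_split_epi : Elegant R ->
  forall a b (s : Hom a b), degen R s -> exists t : Hom b a, comp s t = idm b.
Proof.
  intros El a b s Ds.
  destruct (excluded_middle_informative (exists t : Hom b a, comp s t = idm b))
    as [Hsec | Nsec]; [exact Hsec | exfalso].
  set (X := glued_repr a b s).
  set (y0 := exist (fun p => Factors a b s b (fst p) -> snd p = false)
               (idm b, false) (fun _ => eq_refl) : X b).
  set (y1 := exist (fun p => Factors a b s b (fst p) -> snd p = false)
               (idm b, true) (fun F => False_rect _ (Nsec F)) : X b).
  assert (Es : act X s y0 = act X s y1).
  { assert (Fs : Factors a b s a (comp (idm b) s))
      by (exists (idm a); rewrite comp_id_l, comp_id_r; reflexivity).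
    apply exist_eq; simpl; rewrite !reset_flag_Factors by exact Fs; reflexivity. }
  destruct (El X a (act X s y0)) as [_ Huniq].
  pose proof (Huniq b s y0 b s y1 Ds (glued_repr_Nondeg a b s y0 eq_refl) eq_refl
                Ds (glued_repr_Nondeg a b s y1 eq_refl) Es) as U.
  apply inj_pair2, (f_equal (fun w => snd (proj1_sig (snd w)))) in U.
  discriminate U.
Qed.

End SplitDegeneracies.

Definition CospanCompletion (C : Category) : Prop :=
  forall (a b c : C) (f : Hom a c) (g : Hom b c),
    exists (p : C) (u : Hom p a) (v : Hom p b), comp f u = comp g v.

Lemma CospanCompletion_Reedy (C : Category) (R : Reedy C) :
  (forall a b (s : Hom a b), degen R s -> exists t : Hom b a, comp s t = idm b) ->
  (forall (a b c : C) (f : Hom a c) (g : Hom b c), face R f ->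
     exists (p : C) (u : Hom p a) (v : Hom p b), comp f u = comp g v) ->
  CospanCompletion C.
Proof.
  intros Hsplit Hface a b c f g.
  destruct (factor_exists _ R _ _ f) as [m [fm [fp [Dfm [Ffp ->]]]]].
  destruct (Hsplit _ _ fm Dfm) as [t Ht].
  destruct (Hface _ _ _ fp g Ffp) as [p [u [v Esq]]].
  exists p, (comp t u), v.
  rewrite <- Esq, comp_assoc; f_equal.
  rewrite <- comp_assoc, Ht, comp_id_r; reflexivity.
Qed.

Definition ElSpan (C : Category) (X : Presheaf C) (e1 e2 : {a : C & X a}) : Prop :=
  exists (c : C) (f : Hom c (projT1 e1)) (g : Hom c (projT1 e2)),
    act X f (projT2 e1) = act X g (projT2 e2).

Arguments ElSpan {C} X e1 e2.

Lemma ElSpan_ConnEl (C : Category) (X : Presheaf C) e1 e2 :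
  ElSpan X e1 e2 -> ConnEl X e1 e2.
Proof.
  intros [c [f [g E]]].
  apply rst_trans with (existT _ c (act X f (projT2 e1))).
  - apply rst_sym, rst_step; exists f; reflexivity.
  - apply rst_step; exists g; symmetry; exact E.
Qed.

Lemma ConnEl_ElSpan (C : Category) : CospanCompletion C ->
  forall (X : Presheaf C) e1 e2, ConnEl X e1 e2 -> ElSpan X e1 e2.
Proof.
  intros Hcomp X e1 e2 H.
  induction H as [x y [f Hf] | x | x y _ IH | x y z _ [c1 [f1 [g1 E1]]] _ [c2 [f2 [g2 E2]]]].
  - exists (projT1 x), (idm _), f; rewrite act_id; symmetry; exact Hf.
  - exists (projT1 x), (idm _), (idm _); reflexivity.
  - destruct IH as [c [f [g E]]]; exists c, g, f; symmetry; exact E.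
  - destruct (Hcomp _ _ _ g1 f2) as [p [u [v Esq]]].
    exists p, (comp f1 u), (comp g2 v).
    rewrite !act_comp, E1, <- E2, <- !act_comp, Esq; reflexivity.
Qed.

Section KernelPair.

Variables (C : Category) (X Y : Presheaf C) (alpha : NatTrans X Y).

Definition kernel_pair_ob (c : C) : Type :=
  { p : X c * X c | alpha c (fst p) = alpha c (snd p) }.

Definition kernel_pair_act (c d : C) (f : Hom c d) (p : kernel_pair_ob d) : kernel_pair_ob c.
Proof.
  refine (exist _ (act X f (fst (proj1_sig p)), act X f (snd (proj1_sig p))) _).
  destruct p as [[x y] Exy]; simpl in *; rewrite !natural, Exy; reflexivity.
Defined.

Lemma kernel_pair_act_id c (p : kernel_pair_ob c) : kernel_pair_act c c (idm c) p = p.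
Proof. apply exist_eq; destruct p as [[x y] ?]; simpl; rewrite !act_id; reflexivity. Qed.

Lemma kernel_pair_act_comp c d e (f : Hom c d) (g : Hom d e) (p : kernel_pair_ob e) :
  kernel_pair_act c e (comp g f) p = kernel_pair_act c d f (kernel_pair_act d e g p).
Proof. apply exist_eq; destruct p as [[x y] ?]; simpl; rewrite !act_comp; reflexivity. Qed.

Definition kernel_pair : Presheaf C :=
  Build_Presheaf C kernel_pair_ob kernel_pair_act kernel_pair_act_id kernel_pair_act_comp.

Definition kernel_pair_fst : NatTrans kernel_pair X :=
  Build_NatTrans C kernel_pair X (fun c p => fst (proj1_sig p)) (fun _ _ _ _ => eq_refl).

Definition kernel_pair_snd : NatTrans kernel_pair X :=
  Build_NatTrans C kernel_pair X (fun c p => snd (proj1_sig p)) (fun _ _ _ _ => eq_refl).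

Lemma MonoPsh_inj : MonoPsh alpha -> forall a (x y : X a), alpha a x = alpha a y -> x = y.
Proof.
  intros M a x y Exy.
  exact (M kernel_pair kernel_pair_fst kernel_pair_snd (fun c p => proj2_sig p)
           a (exist _ (x, y) Exy)).
Qed.

End KernelPair.

Theorem mainTheorem7 (C : Category) (R : Reedy C) :
  Elegant R ->
  (forall (a b c : C) (f : Hom a c) (g : Hom b c), face R f ->
     exists (p : C) (pa : Hom p a) (pb : Hom p b),
       IsPullback f g pa pb /\
       face R pb /\
       (face R g -> face R pa) /\
       (degen R g -> degen R pa)) ->
  forall (X Y : Presheaf C) (alpha : NatTrans X Y),
    MonoPsh alpha -> ColimInjective alpha.
Proof.
  intros El PB X Y alpha M e1 e2 H.
  assert (Hcomp : CospanCompletion C).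
  { apply (CospanCompletion_Reedy C R (degen_split_epi C R El)).
    intros a b c f g Ff.
    destruct (PB a b c f g Ff) as [p [pa [pb [[Esq _] _]]]].
    exists p, pa, pb; exact Esq. }
  destruct (ConnEl_ElSpan C Hcomp Y _ _ H) as [c [f [g E]]].
  apply ElSpan_ConnEl; exists c, f, g.
  apply (MonoPsh_inj C X Y alpha M); rewrite !natural; exact E.
Qed.
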